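(* Let $G=(V,E)$ be a simple graph with $|V|=n$, adjacency matrix $A$, and let $D$ be the diagonal matrix of vertex degrees of $G$. A vector $x\in\{0,1\}^n$ solves $\mathrm{LCP}(A+I,-\mathbf{e})$ if and only if $$0\leq (A+I)x-\mathbf{e}\leq (D-I)(\mathbf{e}-x),$$ where $I$ is the $n\times n$ identity and $\mathbf{e}$ the all-ones vector.
   Context: $x$ solves $\mathrm{LCP}(A+I,-\mathbf{e})$ iff $x\geq 0$, $(A+I)x\geq\mathbf{e}$ and $x^\top((A+I)x-\mathbf{e})=0$. Inequalities between vectors are componentwise. *)

From HB Require Import structures.
From mathcomp Require Import all_boot all_order all_algebra.
Set Implicit Arguments. Unset Strict Implicit. Unset Printing Implicit Defensive.
Import Order.TTheory GRing.Theory Num.Theory.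
Local Open Scope ring_scope.

Definition simple_graph (n : nat) (adj : rel 'I_n) : Prop :=
  symmetric adj /\ irreflexive adj.

Definition adjmx (R : numDomainType) (n : nat) (adj : rel 'I_n) : 'M[R]_n :=
  \matrix_(i, j) (adj i j)%:R.

Definition degmx (R : numDomainType) (n : nat) (adj : rel 'I_n) : 'M[R]_n :=
  diag_mx (\row_i (#|[pred j | adj i j]|)%:R).

Definition ones (R : numDomainType) (n : nat) : 'cV[R]_n := const_mx 1.

Definition vle (R : numDomainType) (n : nat) (u v : 'cV[R]_n) : Prop :=
  forall i, u i 0 <= v i 0.

Definition solves_LCP (R : numDomainType) (n : nat) (M : 'M[R]_n) (q x : 'cV[R]_n)
  : Prop :=
  vle 0 x /\ vle 0 (M *m x + q) /\ (x^T *m (M *m x + q)) = 0.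

From HB Require Import structures.
From mathcomp Require Import all_boot all_order all_algebra.
Set Implicit Arguments. Unset Strict Implicit. Unset Printing Implicit Defensive.
Import Order.TTheory GRing.Theory Num.Theory.
Local Open Scope ring_scope.

(* For a 0/1 vector x and y := (A + I) x - e, the entry of (D - I)(e - x) is
   0 where x_i = 1 and deg i - 1 where x_i = 0.  Where x_i = 0 the upper bound
   y_i <= deg i - 1 always holds, since y_i counts the neighbours of i in x minus
   one; where x_i = 1 it says y_i <= 0, i.e. together with y >= 0 that y_i = 0,
   which is exactly complementarity x_i y_i = 0. *)

Section ColumnVectors.
Variables (R : numDomainType) (n : nat).

Lemma vle0_mx (x : 'cV[R]_n) : vle 0 x <-> forall i, 0 <= x i 0.
Proof. by split=> h i; have := h i; rewrite mxE. Qed.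

Lemma dot_eq0_nonneg (x y : 'cV[R]_n) : vle 0 x -> vle 0 y ->
  x^T *m y = 0 <-> forall i, x i 0 * y i 0 = 0.
Proof.
move=> /vle0_mx x_ge0 /vle0_mx y_ge0.
have -> : x^T *m y = (\sum_i x i 0 * y i 0)%:M.
  by apply/matrixP=> ? ?; rewrite !ord1 !mxE eqxx mulr1n; apply: eq_bigr=> i _; rewrite mxE.
split=> [/matrixP/(_ 0 0)|xy0].
  rewrite !mxE eqxx mulr1n => /eqP; rewrite psumr_eq0 => [/allP xy0 i|i _].
    by apply/eqP; exact: (implyP (xy0 i (mem_index_enum _))).
  exact: mulr_ge0.
by rewrite big1 ?scalar_mx_is_zero ?raddf0 // => i _.
Qed.

End ColumnVectors.

Section GraphMatrices.
Variables (R : numDomainType) (n : nat) (adj : rel 'I_n).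

Lemma adjmx_mulmx_entry (x : 'cV[R]_n) i :
  (adjmx R adj *m x) i 0 = \sum_j (adj i j)%:R * x j 0.
Proof. by rewrite mxE; apply: eq_bigr=> j _; rewrite mxE. Qed.

Lemma adjmx_mulmx_bounds (x : 'cV[R]_n) i :
  (forall j, 0 <= x j 0 <= 1) ->
  0 <= (adjmx R adj *m x) i 0 <= #|[pred j | adj i j]|%:R.
Proof.
move=> x01; rewrite adjmx_mulmx_entry.
have -> : #|[pred j | adj i j]|%:R = \sum_j (adj i j)%:R :> R.
  rewrite -sum1_card natr_sum big_mkcond /=.
  by apply: eq_bigr=> j _; rewrite inE; case: (adj i j).
apply/andP; split; [apply: sumr_ge0 | apply: ler_sum] => j _;
  have /andP[x_ge0 x_le1] := x01 j; case: (adj i j) => //=; rewrite ?mul0r ?mul1r //.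
Qed.

Lemma degmx_sub1_mulmx_entry (v : 'cV[R]_n) i :
  ((degmx R adj - 1%:M) *m v) i 0 = (#|[pred j | adj i j]|%:R - 1) * v i 0.
Proof. by rewrite mulmxBl mul1mx mul_diag_mx !mxE mulrBl mul1r. Qed.

End GraphMatrices.

Lemma binary_complementarity (R : numDomainType) (b s d : R) :
  b = 0 \/ b = 1 -> 0 <= s <= d -> 0 <= s + b - 1 ->
  b * (s + b - 1) = 0 <-> s + b - 1 <= (d - 1) * (1 - b).
Proof.
move=> [->|->] /andP[s_ge0 s_le_d]; rewrite ?subr0 ?subrr ?mulr0 ?mulr1 ?mul0r ?mul1r.
  by rewrite addr0 lerD2r.
rewrite addrK => _; split=> [->|s_le0] //.
by apply/eqP; rewrite eq_le s_le0 s_ge0.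
Qed.

Theorem lemma7 (R : realFieldType) (n : nat) (adj : rel 'I_n)
  (hG : simple_graph adj) (x : 'cV[R]_n)
  (hx : forall i, x i 0 = 0 \/ x i 0 = 1) :
  solves_LCP (adjmx R adj + 1%:M) (- ones R n) x <->
  (vle 0 ((adjmx R adj + 1%:M) *m x - ones R n) /\
   vle ((adjmx R adj + 1%:M) *m x - ones R n)
       ((degmx R adj - 1%:M) *m (ones R n - x))).
Proof.
set y := (adjmx R adj + 1%:M) *m x - ones R n.
have x01 j : 0 <= x j 0 <= 1 by case: (hx j) => ->; rewrite ?ler01 ?lexx.
have x_ge0 : vle 0 x by apply/vle0_mx=> j; case/andP: (x01 j).
have y_entry i : y i 0 = (adjmx R adj *m x) i 0 + x i 0 - 1.
  by rewrite /y mulmxDl mul1mx !mxE.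
have rhs_entry i : ((degmx R adj - 1%:M) *m (ones R n - x)) i 0
    = (#|[pred j | adj i j]|%:R - 1) * (1 - x i 0).
  by rewrite degmx_sub1_mulmx_entry !mxE.
have slack i : 0 <= y i 0 -> (x i 0 * y i 0 = 0 <->
    y i 0 <= ((degmx R adj - 1%:M) *m (ones R n - x)) i 0).
  rewrite rhs_entry y_entry; apply: binary_complementarity => //.
  exact: adjmx_mulmx_bounds.
split=> [[_ [y_ge0 /(dot_eq0_nonneg x_ge0 y_ge0) xy0]] | [y_ge0 y_le]];
  have /vle0_mx y_ge0_at := y_ge0.
  by split=> // i; apply/(slack i (y_ge0_at i))/xy0.
do 2!split=> //.
by apply/(dot_eq0_nonneg x_ge0 y_ge0)=> i; apply/(slack i (y_ge0_at i))/y_le.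
Qed.
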